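(* Let $G$ be a compact Hausdorff topological group and $X$ a $G$-connected Hausdorff $G$-space, and let $x,y\in X$ with $G_x\subseteq G_y$. Then there exists a $G$-homotopy $F\colon\mathcal{O}(x)\times I\to X$ such that $F_0$ is the inclusion $\mathcal{O}(x)\hookrightarrow X$ and $F_1(\mathcal{O}(x))\subseteq\mathcal{O}(y)$.
   Context: $G_x=\{g: gx=x\}$ is the isotropy group and $\mathcal{O}(x)=Gx$ the orbit of $x$. $X$ is $G$-connected if $X^H=\{x: hx=x\ \forall h\in H\}$ is path-connected for every closed subgroup $H$. A $G$-homotopy is a $G$-equivariant map $\mathcal{O}(x)\times I\to X$, with $G$ acting trivially on $I$ and diagonally on the product. *)

From HB Require Import structures.
From mathcomp Require Import all_boot all_order all_algebra.
From mathcomp Require Import all_classical all_reals all_analysis.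
Set Implicit Arguments. Unset Strict Implicit. Unset Printing Implicit Defensive.
Import Order.TTheory GRing.Theory Num.Theory.
Local Open Scope classical_set_scope.
Local Open Scope ring_scope.

Record topgroup_axioms (G : topologicalType) (mul : G -> G -> G)
    (inv : G -> G) (e : G) : Prop := TopGroupAxioms {
  tg_mulA : forall a b c, mul a (mul b c) = mul (mul a b) c;
  tg_mul1g : forall a, mul e a = a;
  tg_mulVg : forall a, mul (inv a) a = e;
  tg_mul_cont : continuous (fun p : G * G => mul p.1 p.2);
  tg_inv_cont : continuous inv }.

Record G_space (G X : topologicalType) (mul : G -> G -> G) (e : G)
    (act : G -> X -> X) : Prop := GSpace {
  gs_act1 : forall x, act e x = x;
  gs_actM : forall g h x, act (mul g h) x = act g (act h x);
  gs_cont : continuous (fun p : G * X => act p.1 p.2) }.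

Definition closed_subgroup (G : topologicalType) (mul : G -> G -> G)
    (inv : G -> G) (e : G) (H : set G) : Prop :=
  [/\ closed H, H e, (forall a b, H a -> H b -> H (mul a b))
    & (forall a, H a -> H (inv a))].

Definition path_connected (R : realType) (T : topologicalType) (A : set T)
  : Prop :=
  forall a b, A a -> A b -> exists f : R -> T,
    [/\ {within `[0, 1], continuous f}, f 0 = a, f 1 = b
      & f @` `[0, 1] `<=` A].

Definition fixed_set (G X : Type) (act : G -> X -> X) (H : set G) : set X :=
  [set x | forall h, H h -> act h x = x].

Definition G_connected (R : realType) (G X : topologicalType)
    (mul : G -> G -> G) (inv : G -> G) (e : G) (act : G -> X -> X) : Prop :=
  forall H : set G, closed_subgroup mul inv e H ->
    path_connected R (fixed_set act H).

Definition isotropy (G X : Type) (act : G -> X -> X) (x : X) : set G :=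
  [set g | act g x = x].
Definition Gorbit (G X : Type) (act : G -> X -> X) (x : X) : set X :=
  [set act g x | g in [set: G]].

From HB Require Import structures.
From mathcomp Require Import all_boot all_order all_algebra.
From mathcomp Require Import all_classical all_reals all_analysis.
Import Order.TTheory GRing.Theory Num.Theory.
Local Open Scope classical_set_scope.
Local Open Scope ring_scope.

(* Take a path f in X^{G_x} from x to y, which exists because X^{G_x} is
   path-connected and contains y as G_x is contained in G_y.  The homotopy
   is F (g x, t) = g (f t): it is well defined because f t is fixed by G_x,
   and continuous because G x [0,1] is compact and maps continuously onto
   O(x) x [0,1], so that this surjection is a quotient map. *)

Lemma hausdorff_prod (T U : topologicalType) :
  hausdorff_space T -> hausdorff_space U -> hausdorff_space (T * U)%type.
Proof.
move=> hT hU [p1 p2] [q1 q2] cl; congr pair.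
  apply: hT => A B nA nB.
  have [] := cl (A `*` setT) (B `*` setT).
  - by exists (A, setT) => //; split => //; apply: filterT.
  - by exists (B, setT) => //; split => //; apply: filterT.
  by move=> [a b] [[/= ? _] [/= ? _]]; exists a.
apply: hU => A B nA nB.
have [] := cl (setT `*` A) (setT `*` B).
- by exists (setT, A) => //; split => //; apply: filterT.
- by exists (setT, B) => //; split => //; apply: filterT.
by move=> [a b] [[/= _ ?] [/= _ ?]]; exists b.
Qed.

Lemma continuous_within_factor (T U V : topologicalType) (K : set T)
    (pi : T -> U) (F : U -> V) :
  compact K -> hausdorff_space U -> {within K, continuous pi} ->
  {within K, continuous (F \o pi)} -> {within pi @` K, continuous F}.
Proof.
move=> cK hU cpi cFpi; apply/continuous_closedP => C Ccl.
have /closed_subspaceP [W Wcl WE] := proj1 (continuous_closedP _) cFpi C Ccl.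
apply/closed_subspaceP; exists (pi @` (W `&` K)).
  apply: compact_closed => //; apply: continuous_compact.
    exact: continuous_subspaceW cpi.
  by rewrite setIC; exact: compact_closedI.
apply/seteqP; split => u /=.
- move=> [[k WKk <-] _]; split; last by exists k => //; case: WKk.
  by have [] : ((F \o pi) @^-1` C `&` K) k by rewrite -WE.
- move=> [Cu [k Kk piku]]; split; last by exists k.
  have : ((F \o pi) @^-1` C `&` K) k by split => //=; rewrite piku.
  by rewrite -WE => WKk; exists k.
Qed.

Definition orbit_rep {G : choiceType} {X : Type} (e : G) (act : G -> X -> X)
    (x z : X) : G :=
  xget e [set g | act g x = z].

Lemma orbit_repP (G : choiceType) (X : Type) (e : G) (act : G -> X -> X) x z :
  Gorbit act x z -> act (orbit_rep e act x z) x = z.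
Proof.
move=> [g _ <-].
exact: (xgetPex e (ex_intro (fun h => act h x = act g x) g erefl)).
Qed.

Definition orbit_homotopy {G : choiceType} {X T : Type} (e : G)
    (act : G -> X -> X) (x : X) (f : T -> X) (p : X * T) : X :=
  act (orbit_rep e act x p.1) (f p.2).

Section GSpace.
Context {G X : topologicalType} {mul : G -> G -> G} {inv : G -> G} {e : G}
  {act : G -> X -> X}.
Hypotheses (TG : topgroup_axioms mul inv e) (GS : G_space mul e act).

Lemma tg_mulgV g : mul g (inv g) = e.
Proof.
case: TG => mA m1 mV _ _.
transitivity (mul (mul (inv (inv g)) (inv g)) (mul g (inv g))).
  by rewrite mV m1.
by rewrite -mA (mA (inv g) g) mV m1 mV.
Qed.

Lemma gs_orbit_map_continuous z : continuous (act^~ z).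
Proof.
have -> : act^~ z = (fun p : G * X => act p.1 p.2) \o (fun h => (h, z)) by [].
move=> g.
apply: continuous_comp; last exact: (gs_cont GS).
by apply: cvg_pair => //; exact: cvg_cst.
Qed.

Lemma isotropy_closed_subgroup x :
  hausdorff_space X -> closed_subgroup mul inv e (isotropy act x).
Proof.
move=> hX; case: TG => _ _ mVg _ _; case: GS => a1 aM _; split.
- have -> : isotropy act x = act^~ x @^-1` [set x] by [].
  apply: (proj1 (continuous_closedP _) (gs_orbit_map_continuous x)).
  exact/accessible_closed_set1/hausdorff_accessible.
- exact: a1.
- by move=> a b Ha Hb; rewrite /isotropy /= aM Hb Ha.
- by move=> a Ha; rewrite /isotropy /= -{1}Ha -aM mVg a1.
Qed.

Lemma act_fixed_isotropy_eq x z g h :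
  fixed_set act (isotropy act x) z -> act g x = act h x -> act g z = act h z.
Proof.
case: TG => mA m1 mVg _ _; case: GS => a1 aM _ fz gxhx.
have /fz fixz : isotropy act x (mul (inv g) h).
  by rewrite /isotropy /= aM -gxhx -aM mVg a1.
by rewrite -{1}fixz -aM mA tg_mulgV m1.
Qed.

Lemma act_path_continuous (T : topologicalType) (B : set T) (f : T -> X) :
  {within B, continuous f} ->
  {within [set: G] `*` B, continuous (fun p => act p.1 (f p.2))}.
Proof.
move=> cf; pose Phi := fun p : G * T => act p.1 (f p.2).
change {within [set: G] `*` B, continuous Phi}.
apply/subspace_continuousP => q Kq.
have -> : Phi = (fun p : G * X => act p.1 p.2) \o (fun p => (p.1, f p.2)) by [].
apply: continuous_cvg; first exact: (gs_cont GS).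
apply: cvg_pair; first by apply: cvg_within_filter; exact: cvg_fst.
apply: (cvg_comp snd f (G := within B (nbhs q.2))).
  move=> A NA; exists (setT, fun t => B t -> A t).
    by split => //; exact: filterT.
  by move=> [g t] /= [_ Nt] [_ Bt]; apply: Nt.
by move/subspace_continuousP: cf; apply; case: Kq.
Qed.

Section OrbitHomotopy.
Context {T : topologicalType} {B : set T} {x : X} {f : T -> X}.
Hypothesis fB : f @` B `<=` fixed_set act (isotropy act x).

Lemma orbit_homotopy_act g t :
  B t -> orbit_homotopy e act x f (act g x, t) = act g (f t).
Proof.
move=> Bt; apply: (act_fixed_isotropy_eq x); first by apply: fB; exists t.
by rewrite orbit_repP //; exists g.
Qed.

Lemma orbit_homotopy_equivariant g z t : Gorbit act x z -> B t ->
  orbit_homotopy e act x f (act g z, t) =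
    act g (orbit_homotopy e act x f (z, t)).
Proof.
move=> [h _ <-] Bt.
by rewrite -(gs_actM GS) !orbit_homotopy_act // (gs_actM GS).
Qed.

Lemma orbit_homotopy_continuous :
  compact [set: G] -> compact B -> hausdorff_space X -> hausdorff_space T ->
  {within B, continuous f} ->
  {within Gorbit act x `*` B, continuous orbit_homotopy e act x f}.
Proof.
move=> cG cB hX hT cf.
pose pi (p : G * T) := (act p.1 x, p.2).
have -> : Gorbit act x `*` B = pi @` ([set: G] `*` B).
  apply/seteqP; split => [[z t] [[g _ gxz] Bt]|_ [[g t] [_ Bt] <-]].
  - by exists (g, t) => //; rewrite /pi gxz.
  - by split => //; exists g.
apply: continuous_within_factor.
- exact: compact_setX.
- exact: hausdorff_prod.
- apply: continuous_subspaceT => p; apply: cvg_pair; last exact: cvg_snd.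
  exact: (cvg_comp fst (act^~ x) cvg_fst (gs_orbit_map_continuous x _)).
apply: (@subspace_eq_continuous _ _ _ (fun p => act p.1 (f p.2))).
  by move=> [g t] /set_mem [_ Bt]; exact/esym/orbit_homotopy_act.
exact: act_path_continuous.
Qed.

End OrbitHomotopy.
End GSpace.

Theorem lemma3p14 (R : realType) (G X : topologicalType)
  (mul : G -> G -> G) (inv : G -> G) (e : G) (act : G -> X -> X) :
  topgroup_axioms mul inv e ->
  compact [set: G] -> hausdorff_space G ->
  G_space mul e act -> hausdorff_space X ->
  G_connected R mul inv e act ->
  forall x y : X, isotropy act x `<=` isotropy act y ->
  exists F : X * R -> X,
    [/\ {within Gorbit act x `*` `[0, 1], continuous F},
        (forall (g : G) (z : X) (t : R), Gorbit act x z -> 0 <= t <= 1 ->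
            F (act g z, t) = act g (F (z, t))),
        (forall z, Gorbit act x z -> F (z, 0) = z)
      & (forall z, Gorbit act x z -> Gorbit act y (F (z, 1)))].
Proof.
move=> TG cG _ GS hX Gc x y sxy.
have [f [fcont f0 f1 fI]] := Gc _ (isotropy_closed_subgroup TG GS x hX) x y
  (fun h Hh => Hh) (fun h Hh => sxy h Hh).
exists (orbit_homotopy e act x f); split.
- apply: (orbit_homotopy_continuous TG GS fI) => //; exact: segment_compact.
- by move=> g z t zO t01; apply: (orbit_homotopy_equivariant TG GS fI).
- by move=> z zO; rewrite /orbit_homotopy /= f0 orbit_repP.
- by move=> z zO; rewrite /orbit_homotopy /= f1; exists (orbit_rep e act x z).
Qed.
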